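(* Let $X$ be a (real) Banach space with $\dim X>1$. Then $D(X)\ge\sqrt{2}$. More precisely, if $Y$ is any nonzero Banach space, then $d(Y\oplus_1\mathbb{R},\,Y\oplus_2\mathbb{R})\ge d(\ell_1^2,\ell_2^2)=\sqrt2$.
   Context: For isomorphic Banach spaces $X_1,X_2$, $d(X_1,X_2)=\inf\{\|T\|\,\|T^{-1}\|\}$ over all linear isomorphisms $T$ of $X_1$ onto $X_2$; $D(X)=\sup\{d(X_1,X_2): X_1,X_2 \text{ isomorphic to } X\}$. $Y\oplus_p\mathbb{R}$ denotes $Y\times\mathbb{R}$ with norm $\|(y,t)\|=(\|y\|^p+|t|^p)^{1/p}$; $\ell_p^2$ is $\mathbb{R}^2$ with the $\ell_p$ norm. *)

From HB Require Import structures.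
From mathcomp Require Import all_boot all_order all_algebra.
From mathcomp Require Import all_classical all_reals all_analysis.
From mathcomp Require Import ring lra.
Set Implicit Arguments. Unset Strict Implicit. Unset Printing Implicit Defensive.
Import Order.TTheory GRing.Theory Num.Theory.
Import numFieldNormedType.Exports.
Local Open Scope classical_set_scope.
Local Open Scope ring_scope.

Section Banach.
Variable R : realType.

Definition iso_pair (X Y : normedModType R) (T : X -> Y) (S : Y -> X) : Prop :=
  [/\ (forall (a : R) (x y : X), T (a *: x + y) = a *: T x + T y),
      cancel T S, cancel S T, continuous T & continuous S].

Definition isomorphic (X Y : normedModType R) : Prop :=
  exists (T : X -> Y) (S : Y -> X), iso_pair T S.

Definition opnorm (X Y : normedModType R) (T : X -> Y) : \bar R :=
  ereal_sup [set (`|T x|)%:E | x in [set x : X | `|x| <= 1]].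

Definition bmdist (X Y : normedModType R) : \bar R :=
  ereal_inf [set r | exists (T : X -> Y) (S : Y -> X),
                       iso_pair T S /\ r = (opnorm T * opnorm S)%E].

Definition BMdiam (X : normedModType R) : \bar R :=
  ereal_sup [set r | exists (X1 X2 : normedModType R),
                       [/\ isomorphic X1 X, isomorphic X2 X & r = bmdist X1 X2]].

Definition dim_gt1 (X : normedModType R) : Prop :=
  exists x y : X, forall a b : R, a *: x + b *: y = 0 -> a = 0 /\ b = 0.

End Banach.

(* Y (+)_1 R : Y x R with norm ||y|| + |t| *)
Definition oplus1 (R : realType) (Y : normedModType R) : Type := (Y * R^o)%type.
(* Y (+)_2 R : Y x R with norm (||y||^2 + |t|^2)^(1/2) *)
Definition oplus2 (R : realType) (Y : normedModType R) : Type := (Y * R^o)%type.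

Section Oplus.
Variables (R : realType) (Y : normedModType R).

HB.instance Definition _ := GRing.Lmodule.on (oplus1 Y).
HB.instance Definition _ := GRing.Lmodule.on (oplus2 Y).

Definition norm1 (z : oplus1 Y) : R := `|z.1| + `|z.2|.
Definition norm2 (z : oplus2 Y) : R := Num.sqrt (`|z.1| ^+ 2 + `|z.2| ^+ 2).

Lemma norm1D (x y : oplus1 Y) : norm1 (x + y) <= norm1 x + norm1 y.
Proof.
rewrite /norm1 /=; have h1 := ler_normD x.1 y.1.
have h2 := ler_normD (x.2 : R) y.2. lra.
Qed.

Lemma norm1Z (l : R) (x : oplus1 Y) : norm1 (l *: x) = `|l| * norm1 x.
Proof. by rewrite /norm1 /= normrZ normrM mulrDr. Qed.

Lemma norm1_eq0 (x : oplus1 Y) : norm1 x = 0 -> x = 0.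
Proof.
case: x => a b; rewrite /norm1 /= => h.
have ha : `|a| = 0 by apply/eqP; rewrite eq_le normr_ge0 andbT;
  have := normr_ge0 (b : R); lra.
have hb : `|b : R| = 0 by have := normr_ge0 a; lra.
by move/eqP: ha; rewrite normr_eq0 => /eqP ->; move/eqP: hb; rewrite normr_eq0 => /eqP ->.
Qed.

HB.instance Definition _ := Lmodule_isNormed.Build R (oplus1 Y) norm1D norm1Z norm1_eq0.

Lemma minkowski2 (a1 a2 b1 b2 : R) : 0 <= a1 -> 0 <= a2 -> 0 <= b1 -> 0 <= b2 ->
  Num.sqrt ((a1 + b1) ^+ 2 + (a2 + b2) ^+ 2) <=
  Num.sqrt (a1 ^+ 2 + a2 ^+ 2) + Num.sqrt (b1 ^+ 2 + b2 ^+ 2).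
Proof.
move=> ha1 ha2 hb1 hb2.
set A := a1 ^+ 2 + a2 ^+ 2; set B := b1 ^+ 2 + b2 ^+ 2.
have hA : 0 <= A by rewrite /A addr_ge0 // sqr_ge0.
have hB : 0 <= B by rewrite /B addr_ge0 // sqr_ge0.
have sA := sqrtr_ge0 A; have sB := sqrtr_ge0 B.
rewrite -(ger0_norm (addr_ge0 sA sB)) -sqrtr_sqr ler_sqrt; last first.
  by rewrite sqr_ge0.
have eA : Num.sqrt A ^+ 2 = A by rewrite sqr_sqrtr.
have eB : Num.sqrt B ^+ 2 = B by rewrite sqr_sqrtr.
have cs : a1 * b1 + a2 * b2 <= Num.sqrt A * Num.sqrt B.
  rewrite -sqrtrM // -(ger0_norm (addr_ge0 (mulr_ge0 ha1 hb1) (mulr_ge0 ha2 hb2))).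
  rewrite -sqrtr_sqr ler_sqrt; last by rewrite mulr_ge0.
  have := sqr_ge0 (a1 * b2 - a2 * b1); rewrite /A /B; nra.
rewrite /A /B in eA eB *; nra.
Qed.

Lemma norm2D (x y : oplus2 Y) : norm2 (x + y) <= norm2 x + norm2 y.
Proof.
rewrite /norm2 /=.
apply: le_trans (minkowski2 (normr_ge0 x.1) (normr_ge0 (x.2 : R))
                            (normr_ge0 y.1) (normr_ge0 (y.2 : R))).
rewrite ler_sqrt; last by rewrite addr_ge0 // sqr_ge0.
apply: lerD; rewrite lerXn2r ?nnegrE ?addr_ge0 ?normr_ge0 //; exact: ler_normD.
Qed.

Lemma norm2Z (l : R) (x : oplus2 Y) : norm2 (l *: x) = `|l| * norm2 x.
Proof.
rewrite /norm2 /= normrZ normrM !exprMn -mulrDr sqrtrM ?sqr_ge0 //.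
by rewrite sqrtr_sqr normr_id.
Qed.

Lemma norm2_eq0 (x : oplus2 Y) : norm2 x = 0 -> x = 0.
Proof.
case: x => a b; rewrite /norm2 /= => /eqP; rewrite sqrtr_eq0 => h.
have h1 := sqr_ge0 `|a|; have h2 := sqr_ge0 `|b : R|.
have ha : `|a| ^+ 2 = 0 by apply/eqP; rewrite eq_le h1 andbT; lra.
have hb : `|b : R| ^+ 2 = 0 by lra.
move/eqP: ha; rewrite sqrf_eq0 normr_eq0 => /eqP ->.
by move/eqP: hb; rewrite sqrf_eq0 normr_eq0 => /eqP ->.
Qed.

HB.instance Definition _ := Lmodule_isNormed.Build R (oplus2 Y) norm2D norm2Z norm2_eq0.

End Oplus.

Definition ell1_2 (R : realType) : normedModType R := oplus1 (R^o : normedModType R).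
Definition ell2_2 (R : realType) : normedModType R := oplus2 (R^o : normedModType R).

From HB Require Import structures.
From mathcomp Require Import all_boot all_order all_algebra.
From mathcomp Require Import all_classical all_reals all_analysis.
From mathcomp Require Import ring lra.
Set Implicit Arguments. Unset Strict Implicit. Unset Printing Implicit Defensive.
Import Order.TTheory GRing.Theory Num.Theory.
Import numFieldNormedType.Exports.
Local Open Scope classical_set_scope.
Local Open Scope ring_scope.

(** Let T : Y (+)_1 R -> Y (+)_2 R be an isomorphism with inverse S, and e = (0, 1).
    A dimension count gives a unit vector w in Y (+) 0 such that the Y-components
    of T e and T w are collinear; then the parallelogram law holds for T e and T w,
    so for a suitable sign s we get |T (e + s w)|^2 <= |T e|^2 + |T w|^2 <= 2 |T|^2,
    whereas |e + s w|_1 = 2.  Hence |S| >= 2 / (sqrt 2 |T|).  The identity map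
    attains sqrt 2.  If dim X > 1, a norming functional f (Hahn-Banach, via Zorn's
    lemma) splits X as ker f (+) R, and the l1 and l2 renormings of this splitting
    are two spaces isomorphic to X at distance sqrt 2. *)

Lemma linear_continuous_le (R : realType) (X Y : normedModType R)
    (T : {linear X -> Y}) (C : R) :
  (forall x, `|T x| <= C * `|x|) -> continuous T.
Proof.
move=> TC; apply/bounded_linear_continuous/linear_boundedP.
near=> r; have Cr : C <= r by near: r; apply: nbhs_pinfty_ge; rewrite num_real.
by move=> x; apply: le_trans (TC x) (ler_wpM2r _ Cr).
Unshelve. all: by end_near. Qed.

Definition linear_pack (R : realType) (U V : lmodType R) (f : U -> V)
  (fL : linear f) : {linear U -> V} :=
  HB.pack f (GRing.isLinear.Build R U V *:%R f fL).

Lemma iso_pair_bounded (R : realType) (X Y : normedModType R)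
    (T : X -> Y) (S : Y -> X) (C D : R) :
  linear T -> cancel T S -> cancel S T ->
  (forall x, `|T x| <= C * `|x|) -> (forall y, `|S y| <= D * `|y|) ->
  iso_pair T S.
Proof.
move=> TL TK SK TC SD; pose T' := linear_pack TL.
pose S' := linear_pack (can2_linear (f := T') TK SK).
by split => //; [exact: (@linear_continuous_le _ _ _ T') |
                 exact: (@linear_continuous_le _ _ _ S')].
Qed.

Section OperatorNorm.
Variables (R : realType) (X Y : normedModType R).

Lemma opnorm_ge (T : X -> Y) x : `|x| <= 1 -> ((`|T x|)%:E <= opnorm T)%E.
Proof. by move=> x1; apply: ereal_sup_ubound; exists x. Qed.

Lemma opnorm_le (T : X -> Y) (c : R) :
  (forall x, `|x| <= 1 -> `|T x| <= c) -> (opnorm T <= c%:E)%E.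
Proof. by move=> Tc; apply: ge_ereal_sup => _ [x x1 <-]; rewrite lee_fin Tc. Qed.

Lemma opnorm_ge0 (T : X -> Y) : (0 <= opnorm T)%E.
Proof. by apply: le_trans (opnorm_ge T (x := 0) _); rewrite ?normr0. Qed.

Lemma opnorm_ge_div (T : {linear X -> Y}) x :
  x != 0 -> ((`|T x| / `|x|)%:E <= opnorm T)%E.
Proof.
move=> x0; have nx : 0 < `|x| by rewrite normr_gt0.
have -> : `|T x| / `|x| = `|T (`|x|^-1 *: x)|.
  by rewrite linearZ normrZ ger0_norm ?invr_ge0 // mulrC.
by apply: opnorm_ge; rewrite normrZ ger0_norm ?invr_ge0 // mulVf ?gt_eqF.
Qed.

Lemma bmdist_le (T : X -> Y) (S : Y -> X) :
  iso_pair T S -> (bmdist X Y <= opnorm T * opnorm S)%E.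
Proof. by move=> TS; apply: ereal_inf_lbound; exists T, S. Qed.

Lemma lb_bmdist (c : \bar R) :
  (forall (T : {linear X -> Y}) (S : {linear Y -> X}),
     cancel T S -> cancel S T -> (c <= opnorm T * opnorm S)%E) ->
  (c <= bmdist X Y)%E.
Proof.
move=> cTS; apply/ereal_infP => _ [T [S [[TL TK SK _ _] ->]]].
pose T' := linear_pack TL; pose S' := linear_pack (can2_linear (f := T') TK SK).
exact: (cTS T' S').
Qed.

End OperatorNorm.

Section Oplus.
Variables (R : realType) (Y : normedModType R).

Lemma normr_oplus1 (z : oplus1 Y) : `|z| = `|z.1| + `|z.2 : R|.
Proof. by []. Qed.

Lemma sqr_normr_oplus2 (z : oplus2 Y) : `|z| ^+ 2 = `|z.1| ^+ 2 + `|z.2 : R| ^+ 2.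
Proof. by rewrite sqr_sqrtr // addr_ge0 ?sqr_ge0. Qed.

Lemma normr_oplus2_le (z : Y * R^o) : `|z : oplus2 Y| <= `|z : oplus1 Y|.
Proof.
rewrite -(ler_pXn2r (_ : 0 < 2)%N) ?nnegrE ?addr_ge0 //.
rewrite sqr_normr_oplus2 normr_oplus1 sqrrD.
have := mulr_ge0 (normr_ge0 z.1) (normr_ge0 (z.2 : R)); rewrite mulr2n; lra.
Qed.

Lemma normr_oplus1_le (z : Y * R^o) : `|z : oplus1 Y| <= Num.sqrt 2 * `|z : oplus2 Y|.
Proof.
rewrite -(ler_pXn2r (_ : 0 < 2)%N) ?nnegrE ?mulr_ge0 ?sqrtr_ge0 ?addr_ge0 //.
rewrite exprMn sqr_sqrtr // sqr_normr_oplus2 normr_oplus1.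
have := sqr_ge0 (`|z.1| - `|z.2 : R|); rewrite sqrrB sqrrD; lra.
Qed.

Lemma bmdist_oplus_le : (bmdist (oplus1 Y) (oplus2 Y) <= (Num.sqrt 2)%:E)%E.
Proof.
pose T (z : oplus1 Y) : oplus2 Y := z; pose S (z : oplus2 Y) : oplus1 Y := z.
have TS : iso_pair T S.
  apply: (@iso_pair_bounded _ _ _ T S 1 (Num.sqrt 2)) => // z.
    by rewrite mul1r; exact: normr_oplus2_le.
  exact: normr_oplus1_le.
apply: le_trans (bmdist_le TS) _; rewrite -[leRHS]mul1e.
apply: lee_pmul; rewrite ?opnorm_ge0 //; apply: opnorm_le => z z1.
- exact: le_trans (normr_oplus2_le z) z1.
- by apply: le_trans (normr_oplus1_le z) _; rewrite ler_piMr ?sqrtr_ge0.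
Qed.

End Oplus.

Section Collinear.
Variables (R : realType) (V : normedModType R).

Definition collinear (y z : V) :=
  (exists c : R, z = c *: y) \/ (exists c : R, y = c *: z).

Lemma collinearZr (y z : V) (k : R) :
  k != 0 -> collinear y z -> collinear y (k *: z).
Proof.
move=> k0 [[c ->]|[c ->]]; first by left; exists (k * c); rewrite scalerA.
by right; exists (c / k); rewrite scalerA divfK.
Qed.

Lemma parallelogram_collinear (y z : V) : collinear y z ->
  `|y + z| ^+ 2 + `|y - z| ^+ 2 = 2 * `|y| ^+ 2 + 2 * `|z| ^+ 2.
Proof.
have key (u : V) (c : R) :
    `|u + c *: u| ^+ 2 + `|u - c *: u| ^+ 2 = 2 * `|u| ^+ 2 + 2 * `|c *: u| ^+ 2.
  rewrite -{1 3}[u]scale1r -scalerDl -scalerBl !normrZ !exprMn.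
  by rewrite !real_normK ?num_real //; lra.
case=> [[c ->]|[c ->]]; first exact: key.
by rewrite (addrC (c *: z)) -opprB normrN [RHS]addrC; exact: key.
Qed.

Lemma exists_sign_normD_le (P Q : V) :
  `|P + Q| ^+ 2 + `|P - Q| ^+ 2 = 2 * `|P| ^+ 2 + 2 * `|Q| ^+ 2 ->
  exists s : R, `|s| = 1 /\ `|P + s *: Q| ^+ 2 <= `|P| ^+ 2 + `|Q| ^+ 2.
Proof.
move=> para; have [le|lt] := leP `|P + Q| `|P - Q|.
  exists 1; rewrite normr1 scale1r; split => //.
  have := ler_pM (normr_ge0 _) (normr_ge0 _) le le; rewrite -!expr2; lra.
exists (-1); rewrite normrN normr1 scaleN1r; split => //.
have := ler_pM (normr_ge0 _) (normr_ge0 _) (ltW lt) (ltW lt); rewrite -!expr2; lra.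
Qed.

End Collinear.

Lemma oplus2_parallelogram (R : realType) (Y : normedModType R) (P Q : oplus2 Y) :
  collinear P.1 Q.1 ->
  `|P + Q| ^+ 2 + `|P - Q| ^+ 2 = 2 * `|P| ^+ 2 + 2 * `|Q| ^+ 2.
Proof.
move=> /parallelogram_collinear para; rewrite !sqr_normr_oplus2 /=.
rewrite !real_normK ?num_real //; lra.
Qed.

Lemma sqrt2_le_mule (R : realType) (A B : \bar R) (p q c : R) :
  0 < c -> 0 <= p -> 0 <= q -> c ^+ 2 <= p ^+ 2 + q ^+ 2 ->
  (p%:E <= A)%E -> (q%:E <= A)%E -> ((2 / c)%:E <= B)%E ->
  ((Num.sqrt 2)%:E <= A * B)%E.
Proof.
move=> c0 p0 q0 cpq; case: A => [a| |] pA qA cB; last 2 first.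
- rewrite gt0_mulye ?leey //; apply: lt_le_trans cB.
  by rewrite lte_fin divr_gt0.
- by have := lt_le_trans (ltNyr p) pA.
rewrite lee_fin in pA qA; have a0 : (0 <= a%:E)%E by rewrite lee_fin (le_trans p0).
apply: le_trans (lee_wpmul2l a0 cB); rewrite -EFinM lee_fin.
have ca : c ^+ 2 <= (Num.sqrt 2 * a) ^+ 2.
  rewrite exprMn sqr_sqrtr //.
  have := ler_pM p0 p0 pA pA; have := ler_pM q0 q0 qA qA; rewrite -!expr2; lra.
rewrite ler_pXn2r ?nnegrE ?mulr_ge0 ?sqrtr_ge0 ?(ltW c0) ?(le_trans p0) // in ca.
have s2 : Num.sqrt 2 * Num.sqrt 2 = 2 :> R by rewrite -expr2 sqr_sqrtr.
rewrite mulrA ler_pdivlMr //.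
have := ler_wpM2l (sqrtr_ge0 2) ca; rewrite mulrA s2; lra.
Qed.

Section OplusLowerBound.
Variables (R : realType) (Y : normedModType R) (y0 : Y).
Hypothesis y0_neq0 : y0 != 0.
Variables (T : {linear oplus1 Y -> oplus2 Y}) (S : {linear oplus2 Y -> oplus1 Y}).
Hypotheses (TK : cancel T S) (SK : cancel S T).

Let e1 : oplus1 Y := (0, 1).

Lemma exists_kernel_collinear :
  exists v : oplus1 Y, [/\ v != 0, v.2 = 0 & collinear (T e1).1 (T v).1].
Proof.
set a := (T e1).1; have [a0|a_neq0] := eqVneq a 0.
  exists (y0, 0); split => //; last by right; exists 0; rewrite a0 scale0r.
  by apply/eqP => -[y00]; move/eqP: y0_neq0.
(* S maps the plane spanned by (a, 0) and (0, 1) onto a plane, which meets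
   the hyperplane [Y (+) 0] nontrivially. *)
pose a2 : oplus2 Y := (a, 0); pose e2 : oplus2 Y := (0, 1).
have [c [d [cd comb]]] : exists c d : R,
    (c != 0) || (d != 0) /\ c * (S a2).2 + d * (S e2).2 = 0.
  have [p0|p0] := eqVneq (S a2).2 0; first by exists 1, 0; rewrite p0 oner_neq0; lra.
  by exists (S e2).2, (- (S a2).2); rewrite oppr_eq0 p0 orbT; lra.
exists (S (c *: a2 + d *: e2)); split.
- apply: contraTneq cd => /(congr1 T); rewrite SK raddf0 => v0.
  have := congr1 snd v0; rewrite /= scaler0 add0r => /eqP.
  rewrite scaler_eq0 oner_eq0 orbF => /eqP d0.
  have := congr1 fst v0; rewrite /= d0 scale0r addr0 => /eqP.
  by rewrite scaler_eq0 (negPf a_neq0) orbF => /eqP ->; rewrite eqxx.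
- by rewrite linearP linearZ.
- by rewrite SK /= scaler0 addr0; left; exists c.
Qed.

Lemma exists_unit_kernel_collinear :
  exists w : oplus1 Y, [/\ `|w| = 1, w.2 = 0 & collinear (T e1).1 (T w).1].
Proof.
have [v [v0 v2 col]] := exists_kernel_collinear.
have nv : 0 < `|v| by rewrite normr_gt0.
exists (`|v|^-1 *: v); split.
- by rewrite normrZ ger0_norm ?invr_ge0 // mulVf ?gt_eqF.
- by rewrite /= v2 scaler0.
- by rewrite linearZ /=; apply: collinearZr; rewrite ?invr_eq0 ?gt_eqF.
Qed.

Lemma opnorm_oplus_ge : ((Num.sqrt 2)%:E <= opnorm T * opnorm S)%E.
Proof.
have [w [w1 w2 col]] := exists_unit_kernel_collinear.
set P := T e1; set Q := T w.
have [s [s1 hs]] := exists_sign_normD_le (oplus2_parallelogram col).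
have sum2 : `|e1 + s *: w| = 2.
  rewrite normr_oplus1 /= w2 scaler0 add0r addr0 normr1 normrZ s1 mul1r.
  by move: w1; rewrite normr_oplus1 w2 normr0 addr0 => ->.
have TD : T (e1 + s *: w) = P + s *: Q by rewrite linearD linearZ.
have PQ0 : P + s *: Q != 0.
  by apply/eqP => PQ0; move: sum2; rewrite -[e1 + _]TK TD PQ0 raddf0 normr0; lra.
have c0 : 0 < `|P + s *: Q| by rewrite normr_gt0.
apply: (sqrt2_le_mule c0 _ _ hs) => //.
- by apply (opnorm_ge T (x := e1)); rewrite normr_oplus1 normr0 normr1 add0r.
- by apply (opnorm_ge T (x := w)); rewrite w1.
- by have := opnorm_ge_div S PQ0; rewrite -TD TK sum2.
Qed.

End OplusLowerBound.

Lemma bmdist_oplus (R : realType) (Y : normedModType R) (y0 : Y) :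
  y0 != 0 -> bmdist (oplus1 Y) (oplus2 Y) = (Num.sqrt 2)%:E.
Proof.
move=> y0_neq0; apply/eqP; rewrite eq_le bmdist_oplus_le /=.
by apply: lb_bmdist => T S TK SK; exact (opnorm_oplus_ge y0_neq0 TK SK).
Qed.

Section Kernel.
Variables (R : realType) (X : normedModType R) (f : {scalar X}).

Definition ker_scalar := [pred x : X | f x == 0].

Fact ker_scalar_submod_closed : submod_closed ker_scalar.
Proof.
split=> [|a x y]; rewrite !inE ?raddf0 //.
by rewrite linearP => /eqP -> /eqP ->; rewrite mulr0 addr0.
Qed.

HB.instance Definition _ :=
  GRing.isSubmodClosed.Build R X ker_scalar ker_scalar_submod_closed.

Record kernel := Kernel {kval :> X; _ : kval \in ker_scalar}.
HB.instance Definition _ := [isSub for kval].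
HB.instance Definition _ := [Choice of kernel by <:].
HB.instance Definition _ := [SubChoice_isSubLmodule of kernel by <:].

Definition kernel_norm (k : kernel) : R := `|val k|.

Lemma kernel_normD (x y : kernel) :
  kernel_norm (x + y) <= kernel_norm x + kernel_norm y.
Proof. by rewrite /kernel_norm raddfD ler_normD. Qed.

Lemma kernel_normZ (l : R) (x : kernel) : kernel_norm (l *: x) = `|l| * kernel_norm x.
Proof. by rewrite /kernel_norm linearZ normrZ. Qed.

Lemma kernel_norm_eq0 (x : kernel) : kernel_norm x = 0 -> x = 0.
Proof. by move/normr0_eq0 => x0; apply: val_inj; rewrite x0 raddf0. Qed.

HB.instance Definition _ :=
  Lmodule_isNormed.Build R kernel kernel_normD kernel_normZ kernel_norm_eq0.

Lemma normr_kernel (k : kernel) : `|k| = `|val k|.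
Proof. by []. Qed.

Variable e : X.
Hypothesis fe : f e = 1.

Definition kproj (x : X) : kernel := insubd 0 (x - f x *: e).

Lemma kprojE x : val (kproj x) = x - f x *: e.
Proof. by rewrite insubdK // inE linearB linearZ /= fe mulr1 subrr. Qed.

Definition ksum (z : kernel * R^o) : X := val z.1 + z.2 *: e.
Definition ksplit (x : X) : kernel * R^o := (kproj x, f x).

Lemma ksplitK : cancel ksplit ksum.
Proof. by move=> x; rewrite /ksum /= kprojE subrK. Qed.

Lemma ksumK : cancel ksum ksplit.
Proof.
move=> z; have /eqP fz1 : f (val z.1) == 0 := valP z.1.
have fz : f (ksum z) = z.2 by rewrite linearD fz1 linearZ /= fe mulr1 add0r.
rewrite /ksplit fz; case: z fz1 fz => k t /= _ fz; congr (_, _).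
by apply: val_inj; rewrite kprojE fz addrK.
Qed.

Lemma ksum_linear : linear ksum.
Proof.
move=> a z w; rewrite /ksum.
have -> : (a *: z + w).1 = a *: z.1 + w.1 by [].
have -> : (a *: z + w).2 = a * z.2 + w.2 by [].
by rewrite linearP scalerDl -scalerA scalerDr addrACA.
Qed.

Hypotheses (e1 : `|e| = 1) (f_le : forall x, `|f x| <= `|x|).

Lemma normr_ksum_le z : `|ksum z| <= `|z.1| + `|z.2 : R|.
Proof.
by rewrite normr_kernel; apply: le_trans (ler_normD _ _) _; rewrite normrZ e1 mulr1.
Qed.

Lemma normr_ksplit_le x : `|(ksplit x).1| + `|(ksplit x).2 : R| <= 3 * `|x|.
Proof.
rewrite /= normr_kernel kprojE.
have := ler_normB x (f x *: e); rewrite normrZ e1 mulr1.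
have := f_le x; lra.
Qed.

Lemma isomorphic_oplus1_kernel : isomorphic (oplus1 kernel) X.
Proof.
exists ksum, ksplit; apply: (iso_pair_bounded (C := 1) (D := 3)).
- exact: ksum_linear.
- exact: ksumK.
- exact: ksplitK.
- by move=> z; rewrite mul1r normr_ksum_le.
- exact: normr_ksplit_le.
Qed.

Lemma isomorphic_oplus2_kernel : isomorphic (oplus2 kernel) X.
Proof.
exists ksum, ksplit; apply: (iso_pair_bounded (C := Num.sqrt 2) (D := 3)).
- exact: ksum_linear.
- exact: ksumK.
- exact: ksplitK.
- by move=> z; apply: le_trans (normr_ksum_le z) (normr_oplus1_le z).
- by move=> x; apply: le_trans (normr_oplus2_le _) (normr_ksplit_le x).
Qed.

End Kernel.

Section NormingFunctional.
Variables (R : realType) (X : normedModType R).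

(* A subspace of [X * R] below the graph of the norm; by [norm_dominated_fun]
   it is the graph of a partial linear functional dominated by the norm. *)
Definition norm_dominated (G : set (X * R)) :=
  (forall x a y b l, G (x, a) -> G (y, b) -> G (l *: x + y, l * a + b)) /\
  (forall x a, G (x, a) -> a <= `|x|).

Lemma norm_dominated_fun G x a b :
  norm_dominated G -> G (x, a) -> G (x, b) -> a = b.
Proof.
move=> [GL Gle]; suff le_ab u v : G (x, u) -> G (x, v) -> v <= u.
  by move=> Ga Gb; apply/eqP; rewrite eq_le !le_ab.
move=> Gu Gv; have := Gle _ _ (GL _ _ _ _ (-1) Gu Gv).
rewrite scaleN1r addNr normr0 mulN1r; lra.
Qed.

Definition extension (G : set (X * R)) (v : X) (c : R) : set (X * R) :=
  [set z | exists x a t, G (x, a) /\ z = (x + t *: v, a + t * c)].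

(* The one-dimensional step of the Hahn-Banach theorem. *)
Lemma exists_extension_slope G v : norm_dominated G -> G (0, 0) ->
  exists c, forall x a, G (x, a) -> a - `|x - v| <= c /\ c <= `|x + v| - a.
Proof.
move=> [GL Gle] G00.
pose E := [set r : R | exists x a, G (x, a) /\ r = a - `|x - v|].
have Eub x a : G (x, a) -> ubound E (`|x + v| - a).
  move=> Gxa _ [y [b [Gyb ->]]].
  have := Gle _ _ (GL _ _ _ _ 1 Gyb Gxa); rewrite scale1r mul1r => yx.
  have : `|y + x| <= `|y - v| + `|x + v|.
    by apply: le_trans (ler_normD _ _); rewrite addrACA addNr addr0.
  lra.
have E0 : E !=set0 by exists (0 - `|0 - v|), 0, 0.
exists (sup E) => x a Gxa; split; last by apply: ge_sup => //; exact: Eub.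
apply: ub_le_sup; first by exists (`|0 + v| - 0); exact: Eub.
by exists x, a.
Qed.

Lemma norm_dominated_extension G v : norm_dominated G -> G (0, 0) ->
  exists c, norm_dominated (extension G v c).
Proof.
move=> GD G00; have [c cE] := exists_extension_slope v GD G00.
case: GD => GL Gle; exists c; split.
  move=> _ _ _ _ l [x [a [t [Gxa [-> ->]]]]] [y [b [s [Gyb [-> ->]]]]].
  exists (l *: x + y), (l * a + b), (l * t + s); split; first exact: GL.
  congr (_, _); last by ring.
  by rewrite scalerDr scalerA scalerDl addrACA.
move=> _ _ [x [a [t [Gxa [-> ->]]]]].
have [->|t0] := eqVneq t 0; first by rewrite scale0r mul0r !addr0; exact: Gle.
have Nt : `|x + t *: v| = `|t| * `|t^-1 *: x + v|.
  by rewrite -normrZ scalerDr scalerA mulfV // scale1r.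
have at1 : t * (t^-1 * a) = a by rewrite mulrA mulfV // mul1r.
have [tp|tn] := ltrP 0 t.
  have [_] := cE _ _ (GL _ _ _ _ t^-1 Gxa G00); rewrite !addr0 => h.
  have := ler_wpM2l (ltW tp) h; rewrite mulrBr at1 Nt gtr0_norm //; lra.
have tn' : 0 < - t by rewrite oppr_gt0 lt_neqAle t0 tn.
have [+ _] := cE _ _ (GL _ _ _ _ (- t^-1) Gxa G00).
rewrite !addr0 scaleNr -opprD normrN mulNr => h.
have := ler_wpM2l (ltW tn') h.
rewrite mulrBr mulrNN at1 Nt ltr0_norm ?oppr_gt0 //; lra.
Qed.

Lemma norm_dominated_bigcup F : F `<=` norm_dominated ->
  total_on F subset -> norm_dominated (\bigcup_(G in F) G).
Proof.
move=> FD Ftot; split.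
- move=> x a y b l [G FG Gxa] [H FH Hyb].
  have [GH|HG] := Ftot G H FG FH.
    by exists H => //; apply: (FD H FH).1 (GH _ Gxa) Hyb.
  by exists G => //; apply: (FD G FG).1 Gxa (HG _ Hyb).
- by move=> x a [G FG Gxa]; exact: (FD G FG).2 _ _ Gxa.
Qed.

Lemma exists_total_norm_dominated (x0 : X) : exists A, [/\ norm_dominated A,
  A (x0, `|x0|) & forall v, exists a, A (v, a)].
Proof.
(* Nonempty members of the family contain [(x0, |x0|)]; the empty set is
   allowed so that the union of the empty chain belongs to the family. *)
pose P G := norm_dominated G /\ (G !=set0 -> G (x0, `|x0|)).
have chainP F : F `<=` P -> total_on F subset -> P (\bigcup_(G in F) G).
  move=> FP Ftot; split; first by apply: norm_dominated_bigcup Ftot => G /FP[].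
  by move=> [z [G FG Gz]]; exists G => //; apply: (FP G FG).2; exists z.
have [A [[AD Ax0] Amax]] := Zorn_bigcup chainP.
pose L := [set z | exists t : R, z = (t *: x0, t * `|x0|)].
have LP : P L.
  split; first split.
  - move=> x a y b l [t [-> ->]] [s [-> ->]]; exists (l * t + s).
    by rewrite scalerDl scalerA; congr (_, _); ring.
  - by move=> x a [t [-> ->]]; rewrite normrZ ler_wpM2r // ler_norm.
  - by move=> _; exists 1; rewrite scale1r mul1r.
have {}Ax0 : A (x0, `|x0|).
  apply: Ax0; apply: contrapT => /nonemptyPn A0; apply: (Amax L) LP.
  rewrite A0 properEneq eq_sym set0P; split; last exact: sub0set.
  by exists (x0, `|x0|), 1; rewrite scale1r mul1r.
have A00 : A (0, 0).
  by have := AD.1 _ _ _ _ (-1) Ax0 Ax0; rewrite scaleN1r addNr mulN1r addNr.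
exists A; split => // v; apply/not_existsP => Av.
have [c Ac] := norm_dominated_extension v AD A00.
have A_Ac : A `<=` extension A v c.
  by move=> [x a] Axa; exists x, a, 0; rewrite scale0r mul0r !addr0.
apply: (Amax (extension A v c)); last by split => // _; exact: A_Ac.
split => // /(_ (v, c)) Avc; apply: (Av c); apply: Avc.
by exists 0, 0, 1; rewrite scale1r mul1r !add0r.
Qed.

Lemma norm_dominated_graph A : norm_dominated A ->
  (forall v, exists a, A (v, a)) ->
  exists f : {scalar X}, (forall x, `|f x| <= `|x|) /\ forall x, A (x, f x).
Proof.
move=> AD Atot; pose f v := projT1 (cid (Atot v)).
have Af v : A (v, f v) by rewrite /f; case: cid.
have fL : scalar f.
  by move=> l x y; apply: norm_dominated_fun AD (Af _) (AD.1 _ _ _ _ l (Af x) (Af y)).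
pose g : {scalar X} := HB.pack f (GRing.isLinear.Build R X R^o *%R f fL).
exists g; split => // x; rewrite ler_norml AD.2 ?Af // andbT.
have := AD.2 _ _ (Af (- x)); rewrite normrN.
have -> : f (- x) = - f x := raddfN g x.
by rewrite lerNl.
Qed.

Lemma exists_norming_functional (x0 : X) :
  exists f : {scalar X}, (forall x, `|f x| <= `|x|) /\ f x0 = `|x0|.
Proof.
have [A [AD Ax0 Atot]] := exists_total_norm_dominated x0.
have [f [f_le Af]] := norm_dominated_graph AD Atot.
by exists f; split => //; exact: norm_dominated_fun AD (Af x0) Ax0.
Qed.

End NormingFunctional.

Theorem mainTheorem3 (R : realType) :
  (forall X : completeNormedModType R,
      dim_gt1 X -> ((Num.sqrt 2)%:E <= BMdiam X)%E) /\
  (forall Y : completeNormedModType R, (exists y : Y, y != 0) ->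
      (bmdist (ell1_2 R) (ell2_2 R) <= bmdist (oplus1 Y) (oplus2 Y))%E /\
      bmdist (ell1_2 R) (ell2_2 R) = (Num.sqrt 2)%:E).
Proof.
have ell : bmdist (ell1_2 R) (ell2_2 R) = (Num.sqrt 2)%:E.
  exact: (@bmdist_oplus R R^o 1 (oner_neq0 R)).
split=> [X [x [y xy_free]]|Y [y0 y0_neq0]]; last by rewrite ell (bmdist_oplus y0_neq0).
have x_neq0 : x != 0.
  apply/eqP => x0; have := xy_free 1 0; rewrite x0 scaler0 scale0r addr0.
  by move=> /(_ erefl) [/eqP]; rewrite oner_eq0.
have nx : 0 < `|x| by rewrite normr_gt0.
have [f [f_le fx]] := exists_norming_functional x.
pose e := `|x|^-1 *: x.
have fe : f e = 1 by rewrite linearZ /= fx mulVf ?gt_eqF.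
have e1 : `|e| = 1 by rewrite normrZ ger0_norm ?invr_ge0 // mulVf ?gt_eqF.
have u_neq0 : kproj f e y != 0.
  apply/eqP => /(congr1 val); rewrite kprojE // raddf0 => /eqP.
  rewrite subr_eq0 => /eqP ye.
  have := xy_free (- (f y * `|x|^-1)) 1; rewrite scale1r scaleNr -scalerA -ye addNr.
  by move=> /(_ erefl) [_ /eqP]; rewrite oner_eq0.
rewrite -(bmdist_oplus u_neq0); apply: ereal_sup_ubound.
exists (oplus1 (kernel f)), (oplus2 (kernel f)); split => //.
- exact: isomorphic_oplus1_kernel fe e1 f_le.
- exact: isomorphic_oplus2_kernel fe e1 f_le.
Qed.
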